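(* For every $k\ge1$ and every $\ell\in\{1,\dots,12\}$, the string $t_\ell(k)$ is a Nyldon word.
   Context: Strings are over the binary alphabet $\{a,b\}$ ordered by $a \prec b$, and $\prec$ also denotes the induced lexicographic order on strings: $x \prec y$ iff $x$ is a proper prefix of $y$, or there is $i$ with $x[1..i-1]=y[1..i-1]$ and $x[i]\prec y[i]$; $x\preceq y$ means $x\prec y$ or $x=y$. Nyldon words are defined recursively: every string of length $1$ is a Nyldon word; a string $w$ with $|w|\ge 2$ is a Nyldon word iff there is no factorization $w=\gamma_1\cdots\gamma_m$ with $m\ge 2$, each $\gamma_i$ a nonempty Nyldon word, and $\gamma_1\preceq\gamma_2\preceq\cdots\preceq\gamma_m$. For a binary string $w$, $\overline{w}$ is obtained by exchanging $a$ and $b$ letterwise, and $w'$ is $w$ with its last letter removed; $\overline{w}'$ means $(\overline{w})'$. Thue–Morse words: $\mathit{TM}_0=a$ and $\mathit{TM}_k=\mathit{TM}_{k-1}\cdot\overline{\mathit{TM}_{k-1}}$ for $k\ge1$. For $k\ge1$ put $A=\mathit{TM}_{2k}$, $B=\overline{\mathit{TM}_{2k}}$ and define $t_1(k)=b\,A\,B'$, $t_2(k)=b\,A\,B$, $t_3(k)=b\,A\,B\,B'$, $t_4(k)=b\,A$, $t_5(k)=b\,A\,\mathit{TM}_{2k-1}\,\overline{\mathit{TM}_{2k-2}}'$, $t_6(k)=b\,A\,A\,B'$, $t_7(k)=b\,A\,A\,B$, $t_8(k)=b\,A\,A\,B\,B'$, $t_9(k)=b\,A\,B\,A\,A\,B'$,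 $t_{10}(k)=b\,A\,B\,A\,A\,B$, $t_{11}(k)=b\,A\,A\,B\,B\,A\,A\,B'$, $t_{12}(k)=b\,A\,B\,A\,A\,B\,B\,A\,A\,B'$. *)

From mathcomp Require Import all_boot.
Set Implicit Arguments. Unset Strict Implicit. Unset Printing Implicit Defensive.

(* Binary alphabet {a,b}: letters are booleans, a := false, b := true, so a < b. *)
Definition letter := bool.
Definition la : letter := false.
Definition lb : letter := true.
Definition word := seq letter.

Fixpoint lexlt (x y : word) : bool :=
  match x, y with
  | [::], [::] => false
  | [::], _ :: _ => true
  | _ :: _, [::] => false
  | c :: s, d :: t => (~~ c && d) || ((c == d) && lexlt s t)
  end.
Definition lexle (x y : word) : bool := (x == y) || lexlt x y.

(* Nyldon words, recursive definition with fuel n >= |w|. *)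
Fixpoint nyldon_fuel (n : nat) (w : word) : Prop :=
  match n with
  | 0 => False
  | n'.+1 =>
      size w = 1 \/
      (2 <= size w /\
       ~ exists fs : seq word,
           [/\ 2 <= size fs, flatten fs = w,
               (forall g, g \in fs -> 0 < size g /\ nyldon_fuel n' g)
             & sorted lexle fs])
  end.
Definition nyldon (w : word) : Prop := nyldon_fuel (size w) w.

Definition compl (w : word) : word := map negb w.
Definition dropl (w : word) : word := take (size w).-1 w.

Fixpoint TM (k : nat) : word :=
  match k with 0 => [:: la] | k'.+1 => TM k' ++ compl (TM k') end.

Definition tword (l k : nat) : word :=
  let A := TM (2 * k) in
  let B := compl (TM (2 * k)) in
  match l with
  | 1 => lb :: A ++ dropl B
  | 2 => lb :: A ++ B
  | 3 => lb :: A ++ B ++ dropl B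
  | 4 => lb :: A
  | 5 => lb :: A ++ TM (2 * k - 1) ++ dropl (compl (TM (2 * k - 2)))
  | 6 => lb :: A ++ A ++ dropl B
  | 7 => lb :: A ++ A ++ B
  | 8 => lb :: A ++ A ++ B ++ dropl B
  | 9 => lb :: A ++ B ++ A ++ A ++ dropl B
  | 10 => lb :: A ++ B ++ A ++ A ++ B
  | 11 => lb :: A ++ A ++ B ++ B ++ A ++ A ++ dropl B
  | 12 => lb :: A ++ B ++ A ++ A ++ B ++ B ++ A ++ A ++ dropl B
  | _ => [::]
  end.

(* The engine is a Nyldon analogue of the standard factorisation of Lyndon
   words: if u is Nyldon and all its proper Nyldon suffixes are <= r, and v is
   Nyldon with v < u and r <= v, then uv is Nyldon and all its proper Nyldon
   suffixes are <= v.  This rests on two facts proved by a simultaneous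
   induction on length: a proper Nyldon suffix of a Nyldon word is smaller than
   the word, and the last factor of a nondecreasing Nyldon factorisation is the
   longest Nyldon suffix.
   Since TM_{2k+2} = A B B A with A = TM_{2k}, B = compl A, every t_l(k+1) is a
   product of the words t_3(k), t_4(k), t_8(k), t_9(k), t_10(k), t_12(k), and
   these products can be built by the construction above (with t_3(k) bounded
   by t_4(k)); comparing the factors only involves the first letters of A and
   B, so an induction on k works uniformly.  The case k = 1 and the base of the
   induction are checked by computing a standard bracketing. *)

From mathcomp Require Import all_boot zify.
From Stdlib Require Import Classical Wf_nat.

Set Implicit Arguments.
Unset Strict Implicit.
Unset Printing Implicit Defensive.

Lemma lexlt_cat2l p x y : lexlt (p ++ x) (p ++ y) = lexlt x y.
Proof. by elim: p => //= c p ->; case: c. Qed.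

Lemma lexltxx x : lexlt x x = false.
Proof. by elim: x => //= c x ->; case: c. Qed.

Lemma lexlt_trans x y z : lexlt x y -> lexlt y z -> lexlt x z.
Proof.
elim: x y z => [|c x IH] [|d y] [|e z] //=.
by case: c; case: d; case: e => //=; apply: IH.
Qed.

Lemma lexlt_catr x y z : lexlt x y -> lexlt x (y ++ z).
Proof. by elim: x y => [|c x IH] [|d y] //=; case: c; case: d => //=; apply: IH. Qed.

Lemma lexlt_prefix x c y : lexlt x (x ++ c :: y).
Proof. by elim: x => //= d x ->; rewrite eqxx orbT. Qed.

Lemma lexlt_total x y : x != y -> lexlt x y || lexlt y x.
Proof. by elim: x y => [|c x IH] [|d y] //=; case: c; case: d => //=; apply: IH. Qed.

Lemma lexlexx x : lexle x x.
Proof. by rewrite /lexle eqxx. Qed.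

Lemma lexltW x y : lexlt x y -> lexle x y.
Proof. by rewrite /lexle => ->; rewrite orbT. Qed.

Lemma lexle_lt_trans x y z : lexle x y -> lexlt y z -> lexlt x z.
Proof. by case/orP=> [/eqP-> //|]; apply: lexlt_trans. Qed.

Lemma lexlt_le_trans x y z : lexlt x y -> lexle y z -> lexlt x z.
Proof. by move=> xy /orP[/eqP<- //|]; apply: lexlt_trans. Qed.

Lemma lexle_trans x y z : lexle x y -> lexle y z -> lexle x z.
Proof. by case/orP=> [/eqP-> //|xy /(lexlt_le_trans xy)/lexltW]. Qed.

Lemma lexle_ltF x y : lexle x y -> lexlt y x = false.
Proof.
by move=> xy; apply/negP=> /(lexle_lt_trans xy); rewrite lexltxx.
Qed.

Lemma lexltNge x y : ~~ lexle x y -> lexlt y x.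
Proof. by rewrite /lexle negb_or => /andP[/lexlt_total/orP[->|] // /negbTE->]. Qed.

Lemma cat_split (x s u v : word) : x ++ s = u ++ v -> size v <= size s ->
  exists2 z, s = z ++ v & u = x ++ z.
Proof.
move=> xs_uv vs; have xu : size x <= size u.
  by move/(congr1 size): xs_uv; rewrite !size_cat; lia.
move: xs_uv; rewrite -[u](cat_take_drop (size x)) -catA => /eqP.
rewrite eqseq_cat ?size_takel // => /andP[/eqP <- /eqP ->].
by exists (drop (size x) u).
Qed.

(* [lia] treats [size] at the convertible types [word] and [seq letter] (or an
   eqType sort) as distinct atoms; abstracting each [size s] first avoids that. *)
Ltac size_lia :=
  repeat match goal with
  | H : context [size ?s] |- _ => let n := fresh "n" in set n := size s in H *
  | |- context [size ?s] => let n := fresh "n" in set n := size s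
  end; lia.

Lemma size_le_flatten (fs : seq word) :
  all (fun g => 0 < size g) fs -> size fs <= size (flatten fs).
Proof. by elim: fs => //= g fs IH /andP[g0 /IH]; rewrite size_cat; lia. Qed.

Lemma size_mem_flatten (fs : seq word) g : all (fun h => 0 < size h) fs ->
  2 <= size fs -> g \in fs -> size g < size (flatten fs).
Proof.
move=> + + gfs; case/splitPr: gfs => fs1 fs2; rewrite all_cat /= flatten_cat /= !size_cat /=.
case/and3P=> /size_le_flatten le1 g0 /size_le_flatten le2; size_lia.
Qed.

Definition nyldon_step (P : word -> Prop) (w : word) : Prop :=
  size w = 1 \/
  (2 <= size w /\
   ~ exists fs : seq word,
       [/\ 2 <= size fs, flatten fs = w,
           (forall g, g \in fs -> 0 < size g /\ P g) & sorted lexle fs]).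

Lemma nyldon_step_ext (P Q : word -> Prop) w :
  (forall g, size g < size w -> P g -> Q g) -> nyldon_step Q w -> nyldon_step P w.
Proof.
move=> PQ [w1|[w2 nofact]]; [by left | right; split=> // -[fs [fs2 fsw fsP fsS]]].
apply: nofact; exists fs; split=> // g gfs; have [g0 Pg] := fsP g gfs; split=> //.
have fs0 : all (fun h => 0 < size h) fs by apply/allP=> h /fsP[].
by apply: PQ Pg; rewrite -fsw size_mem_flatten.
Qed.

Lemma nyldon_step_iff (P Q : word -> Prop) w :
  (forall g, size g < size w -> P g <-> Q g) -> nyldon_step P w <-> nyldon_step Q w.
Proof. by move=> PQ; split; apply: nyldon_step_ext => g /PQ[]. Qed.

(* [nyldon_fuel n.+1] unfolds to [nyldon_step (nyldon_fuel n)]. *)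
Lemma nyldon_fuelS n w : size w <= n -> nyldon_fuel n.+1 w <-> nyldon_fuel n w.
Proof.
elim: n w => [|n IH] w wn; first by case: w wn => // _; split=> [[|[]]|].
apply: (nyldon_step_iff (P := nyldon_fuel n.+1) (Q := nyldon_fuel n)) => g gw.
by apply: IH; lia.
Qed.

Lemma nyldon_fuel_nyldon n w : size w <= n -> nyldon_fuel n w <-> nyldon w.
Proof.
move=> wn; rewrite /nyldon -(subnKC wn).
elim: (n - size w) => [|d IH]; first by rewrite addn0.
by rewrite addnS nyldon_fuelS ?leq_addr.
Qed.

Lemma nyldonE w : nyldon w <-> nyldon_step nyldon w.
Proof.
rewrite {1}/nyldon; case wn: (size w) => [|n].
  by split=> // -[|[]]; rewrite wn.
apply: (nyldon_step_iff (P := nyldon_fuel n)) => g; rewrite wn => gn.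
by apply: nyldon_fuel_nyldon.
Qed.

Lemma nyldon_gt0 w : nyldon w -> 0 < size w.
Proof. by case: w. Qed.
Definition nyldon_fact (fs : seq word) (w : word) :=
  [/\ flatten fs = w, forall g, g \in fs -> nyldon g & sorted lexle fs].

Lemma nyldon_fact_gt0 fs w : nyldon_fact fs w -> all (fun g => 0 < size g) fs.
Proof. by case=> _ fsN _; apply/allP=> g /fsN/nyldon_gt0. Qed.

Lemma nyldon_fact1 w : nyldon w -> nyldon_fact [:: w] w.
Proof. by split=> [|g /[1!inE]/eqP->|]; rewrite //= cats0. Qed.

Lemma nyldon_factP w : nyldon w <->
  size w = 1 \/ 2 <= size w /\ forall fs, nyldon_fact fs w -> size fs < 2.
Proof.
rewrite nyldonE /nyldon_step; split=> -[w1|[w2 nofact]]; [by left| |by left|]; right.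
  split=> // fs fsw; rewrite ltnNge; apply/negP=> fs2; apply: nofact; exists fs.
  case: fsw => fsw fsN fsS; split=> // g gfs; split; last exact: fsN.
  exact: nyldon_gt0 (fsN g gfs).
split=> // -[fs [fs2 fsw fsN fsS]]; suff: size fs < 2 by rewrite ltnNge fs2.
by apply: nofact; split=> // g /fsN[].
Qed.

Lemma nyldon_letter c : nyldon [:: c].
Proof. by apply/nyldon_factP; left. Qed.

Lemma nyldon_fact_size_lt2 fs w : nyldon w -> nyldon_fact fs w -> size fs < 2.
Proof.
case/nyldon_factP=> [w1|[_ /(_ fs)//]] fsw.
have := size_le_flatten (nyldon_fact_gt0 fsw); case: fsw => -> _ _; size_lia.
Qed.

Lemma nyldon_fact_nyldon fs w : nyldon w -> nyldon_fact fs w -> fs = [:: w].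
Proof.
move=> wN fsw; have := nyldon_fact_size_lt2 wN fsw.
case: fsw => fsw _ _; case: fs fsw => [|g [|//]] /= fsw _; subst w; last by rewrite cats0.
by case: wN.
Qed.

Lemma exists_nyldon_fact w : w != [::] -> exists fs z, nyldon_fact (rcons fs z) w.
Proof.
move=> w0; have [fs fsw] : exists fs, nyldon_fact fs w.
  have [wN|wNN] := classic (nyldon w).
    by exists [:: w]; apply: nyldon_fact1.
  have w2 : 2 <= size w.
    by case: w w0 wNN => [|c [|d w]] // _ /(_ (nyldon_letter c)).
  apply: NNPP => nofact; apply/wNN/nyldon_factP; right; split=> // fs fsw.
  by rewrite ltnNge; apply/negP=> _; apply: nofact; exists fs.
case/lastP: fs fsw => [|fs z] fsw; last by exists fs, z.
by move: w0; case: fsw => <-.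
Qed.

Lemma nyldon_fact_rcons fs z w : nyldon_fact (rcons fs z) w ->
  [/\ w = flatten fs ++ z, nyldon z & nyldon_fact fs (flatten fs)].
Proof.
case=> <- fsN fsS; rewrite flatten_rcons; split=> //.
  by apply: fsN; rewrite mem_rcons mem_head.
split=> // [g gfs|]; first by apply: fsN; rewrite mem_rcons inE gfs orbT.
by move: fsS; rewrite -cats1 => /cat_sorted2[].
Qed.

Lemma nyldon_fact_cat fs z gs y x w : nyldon_fact (rcons fs z) x ->
  nyldon_fact (y :: gs) w -> lexle z y -> nyldon_fact (rcons fs z ++ y :: gs) (x ++ w).
Proof.
case=> <- fsN fsS [<- gsN gsS] zy; split; first by rewrite flatten_cat.
  by move=> g; rewrite mem_cat => /orP[/fsN|/gsN].
rewrite sorted_cat_cons (gsS : path _ y gs) andbT.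
by case: fs {fsN} fsS => [|f fs] /=; rewrite ?zy // !rcons_path last_rcons zy => ->.
Qed.

Lemma not_nyldon_cat fs z gs y x w : nyldon_fact (rcons fs z) x ->
  nyldon_fact (y :: gs) w -> lexle z y -> ~ nyldon (x ++ w).
Proof.
move=> fsx gsw zy /nyldon_fact_size_lt2/(_ (nyldon_fact_cat fsx gsw zy)).
by rewrite size_cat size_rcons addSn addnS.
Qed.

Lemma nyldon_fact_eq0 fs w : nyldon_fact fs w -> (w == [::]) = (fs == [::]).
Proof.
case: fs => [|g fs] fsw; first by case: fsw => <-.
have := size_le_flatten (nyldon_fact_gt0 fsw).
by case: fsw => <- _ _; case: (flatten _).
Qed.

Lemma cat_inj_size (x y s t : word) :
  x ++ s = y ++ t -> size s = size t -> x = y /\ s = t.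
Proof.
move=> eq_xs_yt st; have xy : size x = size y.
  by move/(congr1 size): eq_xs_yt; rewrite !size_cat st => /addIn.
by move/eqP: eq_xs_yt; rewrite eqseq_cat // => /andP[/eqP -> /eqP ->].
Qed.

Lemma ex_minimal (P : nat -> Prop) : (exists n, P n) ->
  exists2 m, P m & forall k, P k -> m <= k.
Proof.
move=> exP; have [m [[Pm min_m] _]] :=
  dec_inh_nat_subset_has_unique_least_element P (fun n => classic (P n)) exP.
by exists m => // k /min_m/leP.
Qed.

Lemma exists_longest_nyldon_suffix g x t :
  g = x ++ t -> x != [::] -> nyldon t ->
  exists x' t', [/\ g = x' ++ t', x' != [::], nyldon t' &
    forall y s, g = y ++ s -> y != [::] -> nyldon s -> size s <= size t'].
Proof.
move=> def_g x0 tN; pose P i := 0 < i /\ nyldon (drop i g).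
have [|m [m0 mN] min_m] := @ex_minimal P.
  by exists (size x); split; [rewrite lt0n size_eq0 | rewrite def_g drop_size_cat].
have mg : m < size g by move/nyldon_gt0: mN; rewrite size_drop subn_gt0.
exists (take m g), (drop m g); split=> //; first by rewrite cat_take_drop.
  by rewrite -size_eq0 size_take mg -lt0n.
move=> y s def_g' y0 sN.
have /min_m : P (size y) by split; [rewrite lt0n size_eq0 | rewrite def_g' drop_size_cat].
by rewrite size_drop def_g' size_cat; size_lia.
Qed.

Definition suffix_lt_upto n := forall g x t, size g < n -> nyldon g ->
  g = x ++ t -> x != [::] -> nyldon t -> lexlt t g.

Definition last_longest_upto n := forall fs v x s, size v <= n ->
  nyldon_fact fs v -> v = x ++ s -> nyldon s -> size s <= size (last [::] fs).

Section SuffixInduction.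

Variable n : nat.
Hypothesis suffix_lt : suffix_lt_upto n.

Lemma last_longest : last_longest_upto n.
Proof.
elim=> [|h fs IH] v x s vn [def_v fsN fsS] vxs sN.
  by move/(congr1 size): vxs (nyldon_gt0 sN); rewrite -def_v size_cat; size_lia.
case: fs IH fsN fsS def_v => [|g fs] IH fsN fsS def_v.
  by rewrite /= cats0 vxs in def_v; rewrite /= def_v size_cat leq_addl.
have gfs : nyldon_fact (g :: fs) (flatten (g :: fs)).
  by split=> // [f ffs|]; [apply: fsN; rewrite inE ffs orbT | apply: path_sorted fsS].
have hg : lexle h g by case/andP: fsS.
rewrite /= in def_v; case: (leqP (size h) (size x)) => hx.
  have [z def_rest def_x] : exists2 z, flatten (g :: fs) = z ++ s & x = h ++ z.
    apply: cat_split; first by rewrite def_v -vxs.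
    by move/(congr1 size): vxs; rewrite -def_v !size_cat; size_lia.
  apply: (IH _ z s _ gfs def_rest sN).
  by move: vn; rewrite -def_v size_cat; size_lia.
have [y def_s def_h] : exists2 y, s = y ++ flatten (g :: fs) & h = x ++ y.
  apply: cat_split; first by rewrite -vxs -def_v.
  by move/(congr1 size): vxs; rewrite -def_v !size_cat; size_lia.
have [gs [z [ygs zg]]] : exists gs z, nyldon_fact (rcons gs z) y /\ lexle z g.
  have [x0|x0] := eqVneq x [::].
    have -> : y = h by rewrite def_h x0.
    by exists [::], h; split=> //; apply: nyldon_fact1; apply/fsN/mem_head.
  have y0 : y != [::] by rewrite -size_eq0; move: hx; rewrite def_h size_cat; size_lia.
  have [gs [z ygs]] := exists_nyldon_fact y0; exists gs, z; split=> //.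
  have [def_y zN _] := nyldon_fact_rcons ygs.
  apply/lexltW/(lexlt_le_trans _ hg)/(suffix_lt (x := x ++ flatten gs)) => //.
  - have : 0 < size (flatten (g :: fs)) by rewrite lt0n size_eq0 (nyldon_fact_eq0 gfs).
    by move: vn; rewrite -def_v size_cat; size_lia.
  - exact/fsN/mem_head.
  - by rewrite def_h def_y catA.
  - by case: (x) x0.
by case: (not_nyldon_cat ygs gfs zg); rewrite -def_s.
Qed.

Lemma longest_nyldon_suffix_lt g x t : size g <= n -> nyldon g ->
  g = x ++ t -> x != [::] -> nyldon t ->
  (forall y s, g = y ++ s -> y != [::] -> nyldon s -> size s <= size t) ->
  lexlt t g.
Proof.
move=> gn gN def_g x0 tN longest.
have [fs [u xfs]] := exists_nyldon_fact x0.
have [def_x uN fsfs] := nyldon_fact_rcons xfs.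
have [ut|/lexltNge tu] := boolP (lexle u t).
  by case: (not_nyldon_cat xfs (nyldon_fact1 tN) ut); rewrite -def_g.
have [fs0|fs0] := eqVneq fs [::].
  by rewrite def_g def_x fs0 lexlt_catr.
have fs_gt0 : 0 < size (flatten fs) by rewrite lt0n size_eq0 (nyldon_fact_eq0 fsfs).
have u_gt0 := nyldon_gt0 uN.
have def_g' : g = flatten fs ++ (u ++ t) by rewrite def_g def_x catA.
have ut0 : u ++ t != [::] by rewrite -size_eq0 size_cat; size_lia.
(* The last factor of [u ++ t] is a proper Nyldon suffix of [g] of length at
   least |t|, hence is [t]; the other factors then form the Nyldon word [u]
   alone, and sortedness gives [u <= t]. *)
have [vs [z utvs]] := exists_nyldon_fact ut0.
have [def_ut zN vsvs] := nyldon_fact_rcons utvs.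
have tz : size t <= size z.
  rewrite -(last_rcons [::] vs z); apply: (last_longest _ utvs erefl tN).
  by move: gn; rewrite def_g' !size_cat; size_lia.
have zt : size z <= size t.
  apply: (longest (flatten fs ++ flatten vs) z _ _ zN); first by rewrite def_g' def_ut catA.
  by rewrite -size_eq0 size_cat; size_lia.
have [def_u def_z] : u = flatten vs /\ t = z.
  by apply: cat_inj_size def_ut _; apply/eqP; rewrite eqn_leq tz zt.
move: def_u vsvs utvs; rewrite -def_z => <- /(nyldon_fact_nyldon uN) ->.
by case=> _ _ /= /andP[ut _]; rewrite (lexle_ltF ut) in tu.
Qed.

Lemma suffix_lt_succ : suffix_lt_upto n.+1.
Proof.
move=> g x t gn gN def_g x0 tN.
have [x' [t' [def_g' x'0 t'N longest]]] := exists_longest_nyldon_suffix def_g x0 tN.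
have t'g := longest_nyldon_suffix_lt gn gN def_g' x'0 t'N longest.
have [z def_t' _] : exists2 z, t' = z ++ t & x = x' ++ z.
  by apply: cat_split (longest _ _ def_g x0 tN); rewrite -def_g -def_g'.
have [z0|z0] := eqVneq z [::]; first by rewrite -[t]/([::] ++ t) -z0 -def_t'.
apply: lexlt_trans t'g; apply: (suffix_lt _ t'N def_t' z0 tN).
have : 0 < size x' by rewrite lt0n size_eq0.
by move: gn; rewrite def_g' size_cat; size_lia.
Qed.

End SuffixInduction.

Lemma nyldon_suffix_lt g x t :
  nyldon g -> g = x ++ t -> x != [::] -> nyldon t -> lexlt t g.
Proof.
have suffix_lt n : suffix_lt_upto n by elim: n => // n; apply: suffix_lt_succ.
exact: suffix_lt (size g).+1 g x t (ltnSn _).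
Qed.

Lemma nyldon_fact_last_longest fs v x s :
  nyldon_fact fs v -> v = x ++ s -> nyldon s -> size s <= size (last [::] fs).
Proof.
have suffix_lt : suffix_lt_upto (size v) by move=> g y t _; apply: nyldon_suffix_lt.
exact: (last_longest suffix_lt (leqnn _)).
Qed.

Definition nyldon_bounded (u r : word) := nyldon u /\
  forall x s, u = x ++ s -> x != [::] -> nyldon s -> lexle s r.

Lemma nyldon_bounded_letter c r : nyldon_bounded [:: c] r.
Proof.
by split=> [|[|d [|e x]] [|f s] //= [_ ->] //]; apply: nyldon_letter.
Qed.

Lemma nyldon_boundedW u r r' : nyldon_bounded u r -> lexle r r' -> nyldon_bounded u r'.
Proof. by case=> uN ur rr'; split=> // x s def_u x0 /(ur x s def_u x0)/lexle_trans; apply. Qed.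

Section NyldonBoundedCat.

Variables u r v : word.
Hypotheses (ur : nyldon_bounded u r) (vN : nyldon v).
Hypotheses (vu : lexlt v u) (rv : lexle r v).

Lemma not_nyldon_suffix_cat x y : u = x ++ y -> x != [::] -> y != [::] -> ~ nyldon (y ++ v).
Proof.
move=> def_u x0 y0; have [gs [z ygs]] := exists_nyldon_fact y0.
have [def_y zN _] := nyldon_fact_rcons ygs.
apply: (not_nyldon_cat ygs (nyldon_fact1 vN)); apply: lexle_trans rv.
apply: (ur.2 (x ++ flatten gs) z _ _ zN); first by rewrite def_u def_y catA.
by case: (x) x0.
Qed.

Lemma nyldon_cat_of_bounded : nyldon (u ++ v).
Proof.
have [u_gt0 v_gt0] := (nyldon_gt0 ur.1, nyldon_gt0 vN).
apply/nyldon_factP; right; split=> [|fs fsuv]; first by rewrite size_cat; size_lia.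
rewrite ltnNge; apply/negP=> fs2; case/lastP: fs fsuv fs2 => [//|fs z] fsuv fs2.
have [def_uv zN fsfs] := nyldon_fact_rcons fsuv.
have vz : size v <= size z.
  by rewrite -(last_rcons [::] fs z); apply: (nyldon_fact_last_longest fsuv erefl vN).
have fs0 : fs != [::] by case: (fs) fs2.
have [vz'|zv] := ltnP (size v) (size z).
  have [y def_z def_u] := cat_split (esym def_uv) vz.
  apply: (not_nyldon_suffix_cat def_u); rewrite -?def_z //.
    by rewrite (nyldon_fact_eq0 fsfs).
  by apply/eqP=> y0; move: vz'; rewrite def_z y0 ltnn.
have [def_u def_v] : u = flatten fs /\ v = z.
  by apply: cat_inj_size def_uv _; apply/eqP; rewrite eqn_leq vz zv.
have fs_u : fs = [:: u] by apply: (nyldon_fact_nyldon ur.1); rewrite def_u.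
move: fsuv; rewrite fs_u -def_v.
by case=> _ _ /= /andP[/lexle_ltF]; rewrite vu.
Qed.

Lemma nyldon_bounded_cat : nyldon_bounded (u ++ v) v.
Proof.
split=> [|x s def_uv x0 sN]; first exact: nyldon_cat_of_bounded.
have [vs|sv] := leqP (size v) (size s).
  have [y def_s def_u] := cat_split (esym def_uv) vs.
  have [y0|y0] := eqVneq y [::]; first by rewrite def_s y0 lexlexx.
  by case: (not_nyldon_suffix_cat def_u x0 y0); rewrite -def_s.
have [y def_v _] := cat_split def_uv (ltnW sv).
apply/lexltW/(nyldon_suffix_lt vN def_v) => //.
by apply/eqP=> y0; move: sv; rewrite def_v y0 ltnn.
Qed.

End NyldonBoundedCat.

Inductive bracketing := Leaf of letter | Node of bracketing & bracketing.

Fixpoint foliage (t : bracketing) : word :=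
  match t with Leaf c => [:: c] | Node l r => foliage l ++ foliage r end.

Definition right_foliage (t : bracketing) : word :=
  if t is Node _ r then foliage r else [::].

Fixpoint standard (t : bracketing) : bool :=
  if t is Node l r then
    [&& standard l, standard r, lexlt (foliage r) (foliage l)
      & lexle (right_foliage l) (foliage r)]
  else true.

Lemma standard_bounded t :
  standard t -> nyldon_bounded (foliage t) (right_foliage t).
Proof.
elim: t => [c|l IHl r IHr] /=; first by move=> _; apply: nyldon_bounded_letter.
by case/and4P=> /IHl lN /IHr[rN _] rl lr; apply: nyldon_bounded_cat lr.
Qed.

(* Right-to-left greedy bracketing; it is only trusted through [standard]. *)
Fixpoint push (t : bracketing) (ts : seq bracketing) : seq bracketing :=
  if ts is t' :: ts' then
    if lexlt (foliage t') (foliage t) then push (Node t t') ts' else t :: ts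
  else [:: t].

Definition nyldon_cert (w r : word) : bool :=
  if foldr (push \o Leaf) [::] w is [:: t] then
    [&& standard t, foliage t == w & lexle (right_foliage t) r]
  else false.

Lemma nyldon_certP w r : nyldon_cert w r -> nyldon_bounded w r.
Proof.
rewrite /nyldon_cert; case: (foldr _ _ _) => [|t [|//]] //.
by case/and3P=> /standard_bounded tr /eqP <- /(nyldon_boundedW tr).
Qed.

Lemma nyldon_of_cert w : nyldon_cert w w -> nyldon w.
Proof. by case/nyldon_certP. Qed.

(* t_l(k) with A = TM_{2k} and Bd = B', so that B = Bd ++ [:: b]; t_5 is not
   of this form and is treated separately. *)
Definition tpat (l : nat) (A Bd : word) : word :=
  let B := Bd ++ [:: true] in
  match l with
  | 1 => true :: A ++ Bd
  | 2 => true :: A ++ B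
  | 3 => true :: A ++ B ++ Bd
  | 4 => true :: A
  | 6 => true :: A ++ A ++ Bd
  | 7 => true :: A ++ A ++ B
  | 8 => true :: A ++ A ++ B ++ Bd
  | 9 => true :: A ++ B ++ A ++ A ++ Bd
  | 10 => true :: A ++ B ++ A ++ A ++ B
  | 11 => true :: A ++ A ++ B ++ B ++ A ++ A ++ Bd
  | 12 => true :: A ++ B ++ A ++ A ++ B ++ B ++ A ++ A ++ Bd
  | _ => [::]
  end.

(* A and Bd at level k+1: TM_{2k+2} = A B B A and its complement is B A A B. *)
Definition next_A (A Bd : word) : word := A ++ (Bd ++ [:: true]) ++ (Bd ++ [:: true]) ++ A.
Definition next_Bd (A Bd : word) : word := (Bd ++ [:: true]) ++ A ++ A ++ Bd.

Ltac cat_norm := repeat progress rewrite -?catA /=.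

(* Works for symbolic [A1], [Bd1]: cancelling common prefixes always reaches
   two distinct known letters or a proper prefix. *)
Ltac lex_decide :=
  cat_norm; repeat progress rewrite ?lexlt_cat2l /=; first [done | apply: lexlt_prefix].

Record tm_level (A Bd : word) : Prop := TmLevel {
  tm_level4 : nyldon (tpat 4 A Bd);
  tm_level8 : nyldon (tpat 8 A Bd);
  tm_level9 : nyldon (tpat 9 A Bd);
  tm_level10 : nyldon (tpat 10 A Bd);
  tm_level12 : nyldon (tpat 12 A Bd);
  tm_level3 : nyldon_bounded (tpat 3 A Bd) (tpat 4 A Bd)
}.

Section NextLevel.

Variables A1 Bd1 : word.
Let A := false :: A1.
Let Bd := true :: Bd1.
Let T l := tpat l A Bd.

Lemma tpat_next l : tpat l (next_A A Bd) (next_Bd A Bd) =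
  match l with
  | 1 => T 3 ++ T 9
  | 2 => T 3 ++ T 10
  | 3 => T 3 ++ T 12
  | 4 => T 3 ++ T 4
  | 6 => (T 3 ++ T 8) ++ T 9
  | 7 => (T 3 ++ T 8) ++ T 10
  | 8 => (T 3 ++ T 8) ++ T 12
  | 9 => (T 3 ++ T 9) ++ (T 3 ++ T 8) ++ T 9
  | 10 => (T 3 ++ T 9) ++ (T 3 ++ T 8) ++ T 10
  | 11 => ((T 3 ++ T 8) ++ T 12) ++ (T 3 ++ T 8) ++ T 9
  | 12 => (T 3 ++ T 9) ++ ((T 3 ++ T 8) ++ T 12) ++ (T 3 ++ T 8) ++ T 9
  | _ => [::]
  end.
Proof.
by case: l => [|[|[|[|[|[|[|[|[|[|[|[|[|l]]]]]]]]]]]]];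
  rewrite /T /tpat /next_A /next_Bd /A /Bd; cat_norm.
Qed.

Ltac bounded_cat u v :=
  apply: (nyldon_bounded_cat u v); rewrite /T /tpat /A /Bd;
  first [apply: lexlexx | apply: lexltW; lex_decide | lex_decide].

Lemma tm_level_next : tm_level A Bd ->
  [/\ tm_level (next_A A Bd) (next_Bd A Bd),
      forall l, 1 <= l <= 12 -> l != 5 -> nyldon (tpat l (next_A A Bd) (next_Bd A Bd))
    & nyldon (true :: next_A A Bd ++ (A ++ Bd ++ [:: true]) ++ Bd)].
Proof.
case=> n4 n8 n9 n10 n12 b3.
have b34 : nyldon_bounded (T 3 ++ T 4) (T 4) by bounded_cat b3 n4.
have b312 : nyldon_bounded (T 3 ++ T 12) (T 12) by bounded_cat b3 n12.
have b38 : nyldon_bounded (T 3 ++ T 8) (T 8) by bounded_cat b3 n8.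
have b39 : nyldon_bounded (T 3 ++ T 9) (T 9) by bounded_cat b3 n9.
have b310 : nyldon_bounded (T 3 ++ T 10) (T 10) by bounded_cat b3 n10.
have b389 : nyldon_bounded ((T 3 ++ T 8) ++ T 9) (T 9) by bounded_cat b38 n9.
have b3810 : nyldon_bounded ((T 3 ++ T 8) ++ T 10) (T 10) by bounded_cat b38 n10.
have b3812 : nyldon_bounded ((T 3 ++ T 8) ++ T 12) (T 12) by bounded_cat b38 n12.
have b399 : nyldon_bounded ((T 3 ++ T 9) ++ (T 3 ++ T 8) ++ T 9) ((T 3 ++ T 8) ++ T 9).
  by bounded_cat b39 b389.1.
have b3910 : nyldon_bounded ((T 3 ++ T 9) ++ (T 3 ++ T 8) ++ T 10) ((T 3 ++ T 8) ++ T 10).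
  by bounded_cat b39 b3810.1.
have b1239 : nyldon_bounded (((T 3 ++ T 8) ++ T 12) ++ (T 3 ++ T 8) ++ T 9) ((T 3 ++ T 8) ++ T 9).
  by bounded_cat b3812 b389.1.
have b3912 : nyldon_bounded ((T 3 ++ T 9) ++ ((T 3 ++ T 8) ++ T 12) ++ (T 3 ++ T 8) ++ T 9)
                            (((T 3 ++ T 8) ++ T 12) ++ (T 3 ++ T 8) ++ T 9).
  by bounded_cat b39 b1239.1.
split.
- split; rewrite !tpat_next; [exact: b34.1 | exact: b3812.1 | exact: b399.1 |
    exact: b3910.1 | exact: b3912.1 | apply: nyldon_boundedW b312 _].
  by apply: lexltW; rewrite /T /tpat /A /Bd; lex_decide.
- move=> l /andP[l_gt0 l_le12] l5; rewrite tpat_next.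
  case: l l_gt0 l_le12 l5 => [|[|[|[|[|[|[|[|[|[|[|[|[|l]]]]]]]]]]]]] //= _ _ _.
  + exact: b39.1.
  + exact: b310.1.
  + exact: b312.1.
  + exact: b34.1.
  + exact: b389.1.
  + exact: b3810.1.
  + exact: b3812.1.
  + exact: b399.1.
  + exact: b3910.1.
  + exact: b1239.1.
  + exact: b3912.1.
- have -> : true :: next_A A Bd ++ (A ++ Bd ++ [:: true]) ++ Bd = T 3 ++ T 8.
    by rewrite /T /tpat /next_A; cat_norm.
  exact: b38.1.
Qed.

End NextLevel.

Lemma complK : involutive compl.
Proof. exact: (mapK negbK). Qed.

Lemma compl_cat x y : compl (x ++ y) = compl x ++ compl y.
Proof. exact: map_cat. Qed.

Lemma dropl_cats1 x c : dropl (x ++ [:: c]) = x.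
Proof. by rewrite /dropl size_cat addn1 take_size_cat. Qed.

Lemma TM_SS n : TM n.+2 = TM n ++ compl (TM n) ++ compl (TM n) ++ TM n.
Proof. by rewrite [TM n.+2]/= compl_cat complK -catA. Qed.

Lemma TM_next k A Bd : TM (2 * k.+1) = A -> compl (TM (2 * k.+1)) = Bd ++ [:: true] ->
  TM (2 * k.+2) = next_A A Bd /\ compl (TM (2 * k.+2)) = next_Bd A Bd ++ [:: true].
Proof.
have -> : 2 * k.+2 = (2 * k.+1).+2 by rewrite mulnS.
move: (2 * k.+1) => n <- eB.
by rewrite TM_SS !compl_cat complK eB /next_A /next_Bd -!catA.
Qed.

Lemma tword_tpat l k Bd : l != 5 -> compl (TM (2 * k)) = Bd ++ [:: true] ->
  tword l k = tpat l (TM (2 * k)) Bd.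
Proof.
move=> l5; rewrite /tword => ->; rewrite dropl_cats1.
by case: l l5 => [|[|[|[|[|[|[|[|[|[|[|[|[|l]]]]]]]]]]]]].
Qed.

Lemma tm_level_TM k : exists A1 Bd1,
  [/\ TM (2 * k.+1) = false :: A1, compl (TM (2 * k.+1)) = (true :: Bd1) ++ [:: true]
    & tm_level (false :: A1) (true :: Bd1)].
Proof.
elim: k => [|k [A1 [Bd1 [eA eB lvl]]]].
  exists [:: true; true; false], [:: false; false]; split=> //.
  by split; first [apply: nyldon_of_cert | apply: nyldon_certP].
have [eA' eB'] := TM_next eA eB; have [lvl' _ _] := tm_level_next lvl.
by exists (behead (next_A (false :: A1) (true :: Bd1))),
          (behead (next_Bd (false :: A1) (true :: Bd1))).
Qed.

Theorem lemma9 (k l : nat) : 1 <= k -> 1 <= l <= 12 -> nyldon (tword l k).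
Proof.
case: k => [//|[|k]] _ l_range.
  have /allP/(_ l) := isT : all (fun l => nyldon_cert (tword l 1) (tword l 1)) (iota 1 12).
  by rewrite mem_iota => /(_ l_range)/nyldon_of_cert.
have [A1 [Bd1 [eA eB lvl]]] := tm_level_TM k.
have [eA' eB'] := TM_next eA eB; have [_ tpatN t5N] := tm_level_next lvl.
have [->|l5] := eqVneq l 5; last by rewrite (tword_tpat l5 eB') eA'; apply: tpatN.
have -> : tword 5 k.+2 = true :: TM (2 * k.+2) ++
    (TM (2 * k.+1) ++ compl (TM (2 * k.+1))) ++ dropl (compl (TM (2 * k.+1))).
  rewrite /tword -[TM _ ++ compl _]/(TM (2 * k.+1).+1).
  by congr (_ :: _ ++ TM _ ++ dropl (compl (TM _))); lia.
by rewrite eA' eB eA dropl_cats1.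
Qed.
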